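(* Let $V_S,V_A',V_A''$ be finite sets of propositional variables with $V_S\cap V_A''=\emptyset$. Let $\mathcal{T}_S^l,\mathcal{T}_S^u$ be propositional theories over $V_S$, let $\mathcal{T}_B'$ be a theory over $V_S\cup V_A'$ and $\mathcal{T}_B''$ a theory over $V_A'\cup V_A''$. Define ${\mathcal{T}_S^l}' := \mathrm{wsc}(\mathcal{T}_S^l;\mathcal{T}_B';V_A')$, ${\mathcal{T}_S^u}' := \mathrm{snc}(\mathcal{T}_S^u;\mathcal{T}_B';V_A')$. Then $\mathrm{wsc}({\mathcal{T}_S^l}';\mathcal{T}_B'';V_A'')\equiv \mathrm{wsc}(\mathcal{T}_S^l;\mathcal{T}_B'\land\mathcal{T}_B'';V_A'')$ and $\mathrm{snc}({\mathcal{T}_S^u}';\mathcal{T}_B'';V_A'')\equiv \mathrm{snc}(\mathcal{T}_S^u;\mathcal{T}_B'\land\mathcal{T}_B'';V_A'')$ (logical equivalence). That is, the tightest layered abstraction obtained in two layers coincides with the tightest abstraction from $\langle\mathcal{T}_S^l,\mathcal{T}_S^u\rangle$ with respect to $\mathcal{T}_B'\land\mathcal{T}_B''$ over $V_A''$.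
   Context: Classical propositional logic. A theory is a finite set of propositional formulas, identified with the conjunction of its elements (the empty theory is identified with $\top$). A formula is ''over'' a set $W$ of propositional variables if all variables occurring in it belong to $W$. Propositional quantifiers are abbreviations: $\exists p\,B := B[p:=\bot]\lor B[p:=\top]$ and $\forall p\,B := B[p:=\bot]\land B[p:=\top]$; for a finite set $V$, $\exists V$ and $\forall V$ denote iterated quantifiers. For formulas $A,\mathcal{T}$ and a set $W$ of variables, let $V$ be the set of variables occurring in $A$ or $\mathcal{T}$ but not in $W$, and define $\mathrm{snc}(A;\mathcal{T};W):=\exists V(\mathcal{T}\land A)$ and $\mathrm{wsc}(A;\mathcal{T};W):=\forall V(\mathcal{T}\to A)$; both are formulas over $W$. *)

From mathcomp Require Import all_boot.
Set Implicit Arguments. Unset Strict Implicit. Unset Printing Implicit Defensive.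

Inductive form : Type :=
| FVar of nat | FBot | FTop
| FNot of form | FAnd of form & form | FOr of form & form | FImp of form & form.

Fixpoint eval (v : nat -> bool) (f : form) : bool :=
  match f with
  | FVar p => v p | FBot => false | FTop => true
  | FNot g => ~~ eval v g
  | FAnd g h => eval v g && eval v h
  | FOr g h => eval v g || eval v h
  | FImp g h => eval v g ==> eval v h
  end.

Definition fequiv (f g : form) : Prop := forall v, eval v f = eval v g.

Fixpoint fvars (f : form) : seq nat :=
  match f with
  | FVar p => [:: p] | FBot | FTop => [::]
  | FNot g => fvars g
  | FAnd g h | FOr g h | FImp g h => fvars g ++ fvars h
  end.

Definition fover (f : form) (W : seq nat) : Prop := {subset fvars f <= W}.

Fixpoint subst (p : nat) (c : form) (f : form) : form :=
  match f with
  | FVar q => if q == p then c else FVar q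
  | FBot => FBot | FTop => FTop
  | FNot g => FNot (subst p c g)
  | FAnd g h => FAnd (subst p c g) (subst p c h)
  | FOr g h => FOr (subst p c g) (subst p c h)
  | FImp g h => FImp (subst p c g) (subst p c h)
  end.

Definition fex (p : nat) (B : form) : form := FOr (subst p FBot B) (subst p FTop B).
Definition fall (p : nat) (B : form) : form := FAnd (subst p FBot B) (subst p FTop B).
Definition fexs (V : seq nat) (B : form) : form := foldr fex B V.
Definition falls (V : seq nat) (B : form) : form := foldr fall B V.

Definition qvars (A T : form) (W : seq nat) : seq nat :=
  undup [seq p <- fvars A ++ fvars T | p \notin W].

Definition snc (A T : form) (W : seq nat) : form := fexs (qvars A T W) (FAnd T A).
Definition wsc (A T : form) (W : seq nat) : form := falls (qvars A T W) (FImp T A).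

From mathcomp Require Import all_boot.
Set Implicit Arguments. Unset Strict Implicit. Unset Printing Implicit Defensive.

(* Semantically, [snc A T W] holds at [v] iff some valuation agreeing with [v]
   on [W] satisfies [T /\ A], and [wsc A T W] iff every such valuation
   satisfies [T -> A].  In the layered setting, a witness [u] for the outer
   layer (agreeing with [v] on [VA'']) and a witness [w] for the inner layer
   (agreeing with [u] on [VA']) glue into one valuation: take [u] on [VA''] and
   [w] elsewhere.  Since [VS] and [VA''] are disjoint, it sees [TS] and [TB']
   as [w] does and [TB''] as [u] does, so the two layers collapse into one
   abstraction with respect to [TB' /\ TB'']. *)

Lemma eval_eq_in (f : form) (u v : nat -> bool) :
  {in fvars f, u =1 v} -> eval u f = eval v f.
Proof.
elim: f => [q|||g IH|g IHg h IHh|g IHg h IHh|g IHg h IHh] //= Huv;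
  try by rewrite IHg ?IHh // => x hx; apply: Huv; rewrite mem_cat hx ?orbT.
- by apply: Huv; rewrite inE.
- by rewrite IH.
Qed.

Lemma eval_over (f : form) (W : seq nat) (u v : nat -> bool) :
  fover f W -> {in W, u =1 v} -> eval u f = eval v f.
Proof. by move=> fW Huv; apply: eval_eq_in => x /fW; apply: Huv. Qed.

Lemma eval_subst (v : nat -> bool) (p : nat) (c f : form) :
  eval v (subst p c f) = eval (fun x => if x == p then eval v c else v x) f.
Proof.
elim: f => [q|||g IH|g IHg h IHh|g IHg h IHh|g IHg h IHh] //=;
  by rewrite ?IH ?IHg ?IHh // (fun_if (eval v)).
Qed.

Lemma eval_fexs (V : seq nat) (B : form) (v : nat -> bool) :
  eval v (fexs V B) <->
  exists2 u : nat -> bool, (forall x, x \notin V -> u x = v x) & eval u B.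
Proof.
elim: V v => [|p V IH] v /=.
  split=> [Bv|[u uv]]; first by exists v.
  by rewrite (@eval_eq_in _ u v) // => x _; apply: uv.
rewrite !eval_subst /=; split.
- case/orP=> /IH [u uv Bu]; exists u => // x;
  by rewrite inE negb_or => /andP[/negPf xp xV]; rewrite uv // xp.
- case=> u uv Bu.
  have Bpu : eval (fun x => if x == p then u p else v x) (fexs V B).
    apply/IH; exists u => // x xV; case: eqP => [-> //|/eqP xp].
    by rewrite uv // inE negb_or xp.
  by case: (u p) Bpu => ->; rewrite ?orbT.
Qed.

Lemma falls_fexs (V : seq nat) (B : form) (v : nat -> bool) :
  eval v (falls V B) = ~~ eval v (fexs V (FNot B)).
Proof.
elim: V v => [|p V IH] v /=; first by rewrite negbK.
by rewrite !eval_subst /= !IH negb_or.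
Qed.

Lemma eval_fexs_off (W V : seq nat) (B : form) (v : nat -> bool) :
  (forall x, x \in V -> x \notin W) ->
  (forall x, x \in fvars B -> x \notin W -> x \in V) ->
  eval v (fexs V B) <-> exists2 u : nat -> bool, {in W, u =1 v} & eval u B.
Proof.
move=> VW BV; apply: iff_trans (eval_fexs V B v) _; split=> -[u uv Bu].
- exists (fun x => if x \in W then v x else u x) => [x -> //|].
  rewrite (@eval_eq_in B _ u) // => x Bx /=; case: ifP => // xW.
  by rewrite uv //; apply: contraTN xW => /VW.
- exists (fun x => if x \in V then u x else v x) => [x /negPf -> //|].
  rewrite (@eval_eq_in B _ u) // => x Bx /=; case: ifPn => // xV.
  by rewrite uv //; apply: contraR xV => /(BV _ Bx).
Qed.

Lemma mem_qvars (A T : form) (W : seq nat) (x : nat) :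
  (x \in qvars A T W) = ((x \in fvars A) || (x \in fvars T)) && (x \notin W).
Proof. by rewrite /qvars mem_undup mem_filter mem_cat andbC. Qed.

Lemma eval_fexs_qvars (A T B : form) (W : seq nat) (v : nat -> bool) :
  {subset fvars B <= fvars T ++ fvars A} ->
  eval v (fexs (qvars A T W) B) <->
  exists2 u : nat -> bool, {in W, u =1 v} & eval u B.
Proof.
move=> BTA; apply: eval_fexs_off => x; first by rewrite mem_qvars => /andP[].
by move=> /BTA; rewrite mem_cat mem_qvars orbC => -> ->.
Qed.

Lemma sncP (A T : form) (W : seq nat) (v : nat -> bool) :
  reflect (exists2 u : nat -> bool, {in W, u =1 v} & eval u T && eval u A)
          (eval v (snc A T W)).
Proof.
have TA : {subset fvars (FAnd T A) <= fvars T ++ fvars A} by [].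
by apply: (iffP idP) => /(eval_fexs_qvars _ _ TA).
Qed.

Lemma wscP (A T : form) (W : seq nat) (v : nat -> bool) :
  reflect (forall u : nat -> bool, {in W, u =1 v} -> eval u T -> eval u A)
          (eval v (wsc A T W)).
Proof.
have TA : {subset fvars (FNot (FImp T A)) <= fvars T ++ fvars A} by [].
rewrite /wsc falls_fexs; apply: (iffP idP) => [nTA u uv Tu | TAv].
- apply/negPn/negP => nAu; case/negP: nTA.
  by apply/(eval_fexs_qvars _ _ TA); exists u => //=; rewrite Tu nAu.
- apply/negP => /(eval_fexs_qvars _ _ TA) [u uv /=].
  by move/negP; apply; apply/implyP; apply: TAv.
Qed.

Section Layered.

Variables (VS VA' VA'' : seq nat) (A T1 T2 : form).
Hypotheses (VS_VA'' : forall x, x \in VS -> x \notin VA'')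
  (A_over : fover A VS) (T1_over : fover T1 (VS ++ VA'))
  (T2_over : fover T2 (VA' ++ VA'')).

Lemma glue_layers (v u w : nat -> bool) :
  {in VA'', u =1 v} -> {in VA', w =1 u} ->
  exists2 w' : nat -> bool, {in VA'', w' =1 v} &
    [/\ eval w' A = eval w A, eval w' T1 = eval w T1 & eval w' T2 = eval u T2].
Proof.
move=> uv wu; pose w' x := if x \in VA'' then u x else w x.
have w'w : {in VS ++ VA', w' =1 w}.
  move=> x; rewrite /w' mem_cat; case: ifPn => // x'' /orP[xS|/wu //].
  by case/negP: (VS_VA'' xS).
exists w' => [x x''|]; first by rewrite /w' x'' uv.
split; [apply: eval_over A_over _ | apply: eval_over T1_over w'w |].
- by move=> x xS; apply: w'w; rewrite mem_cat xS.
- apply: eval_over T2_over _ => x; rewrite /w' mem_cat.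
  by case: ifPn => [// | _]; rewrite orbF => /wu.
Qed.

Lemma wsc_layered :
  fequiv (wsc (wsc A T1 VA') T2 VA'') (wsc A (FAnd T1 T2) VA'').
Proof.
move=> v; apply/wscP/wscP => [LHS w wv /andP[T1w T2w] | RHS u uv T2u].
  by apply: (wscP _ _ _ _ (LHS w wv T2w)).
apply/wscP => w wu T1w.
have [w' w'v [<- T1w' T2w']] := glue_layers uv wu.
by apply: RHS; rewrite //= T1w' T2w' T1w T2u.
Qed.

Lemma snc_layered :
  fequiv (snc (snc A T1 VA') T2 VA'') (snc A (FAnd T1 T2) VA'').
Proof.
move=> v; apply/sncP/sncP => [[u uv /andP[T2u /sncP[w wu /andP[T1w Aw]]]] |
                              [w wv /andP[/andP[T1w T2w] Aw]]].
  have [w' w'v [Aw' T1w' T2w']] := glue_layers uv wu.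
  by exists w'; rewrite //= Aw' T1w' T2w' T1w T2u Aw.
exists w => //; apply/andP; split=> //; apply/sncP; exists w => //; exact/andP.
Qed.

End Layered.

Theorem mainTheorem6 (VS VA' VA'' : seq nat) (TSl TSu TB' TB'' : form) :
  (forall x, x \in VS -> x \notin VA'') ->
  fover TSl VS -> fover TSu VS ->
  fover TB' (VS ++ VA') -> fover TB'' (VA' ++ VA'') ->
  fequiv (wsc (wsc TSl TB' VA') TB'' VA'') (wsc TSl (FAnd TB' TB'') VA'') /\
  fequiv (snc (snc TSu TB' VA') TB'' VA'') (snc TSu (FAnd TB' TB'') VA'').
Proof.
move=> VS_VA'' TSl_over TSu_over TB'_over TB''_over.
by split; [exact: wsc_layered VS_VA'' TSl_over TB'_over TB''_over |
           exact: snc_layered VS_VA'' TSu_over TB'_over TB''_over].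
Qed.
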